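(* Let $H$ be a subgroup of index $m$ in a group $G$, and let $M$ be a free $\mathbb ZH$-module of rank at most $m$. Then $M\rtimes H$ embeds as a subgroup of the wreath product $\mathbb Z\wr G$.
   Context: $H$ acts on the free $\mathbb ZH$-module $M$ by left multiplication, and $M\rtimes H$ is $M\times H$ with $(m,h)(m',h')=(m+hm',hh')$. The (restricted) wreath product $\mathbb Z\wr G$ is the semidirect product $\mathbb ZG\rtimes G$, with $G$ acting on the group ring $\mathbb ZG$ by left multiplication. *)

From Stdlib Require Import ZArith List.
Open Scope Z_scope.

Record Group := {
  gcar :> Type;
  gmul : gcar -> gcar -> gcar;
  gone : gcar;
  ginv : gcar -> gcar;
  gmulA : forall x y z, gmul x (gmul y z) = gmul (gmul x y) z;
  gmul1l : forall x, gmul gone x = x;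
  gmulVl : forall x, gmul (ginv x) x = gone }.

Arguments gmul {g}. Arguments gone {g}. Arguments ginv {g}.

Record is_subgroup (G : Group) (H : G -> Prop) : Prop := {
  sg_one : H gone;
  sg_mul : forall x y, H x -> H y -> H (gmul x y);
  sg_inv : forall x, H x -> H (ginv x) }.

(** [|I| <= [G:H]]: an injection of I into the set of left cosets gH. *)
Definition card_le_index (G : Group) (H : G -> Prop) (I : Type) : Prop :=
  exists r : I -> G, forall i j, H (gmul (ginv (r i)) (r j)) -> i = j.

Definition fsupp {T : Type} (f : T -> Z) : Prop :=
  exists l : list T, forall t, f t <> 0 -> In t l.

(** The wreath product Z wr G = ZG x| G.  Elements of ZG are finitely
    supported functions G -> Z (f = sum_x f(x) x); G acts by left
    multiplication: (g.f)(x) = f(g^-1 x). *)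
Definition wr_carrier (G : Group) (p : (G -> Z) * G) : Prop := fsupp (fst p).

Definition wr_mul (G : Group) (p q : (G -> Z) * G) : (G -> Z) * G :=
  (fun x => fst p x + fst q (gmul (ginv (snd p)) x), gmul (snd p) (snd q)).

(** The free ZH-module with basis I: M = (+)_{i in I} ZH, i.e. finitely
    supported functions I x H -> Z; here ZH is realised inside ZG as the
    functions supported on H.  The semidirect product M x| H has product
    (m,h)(m',h') = (m + h m', h h') with H acting by left multiplication. *)
Definition free_elt (G : Group) (H : G -> Prop) (I : Type) (m : I -> G -> Z) : Prop :=
  (exists l : list (I * G), forall i x, m i x <> 0 -> In (i, x) l) /\
  (forall i x, m i x <> 0 -> H x).

Definition sd_carrier (G : Group) (H : G -> Prop) (I : Type)
  (p : (I -> G -> Z) * G) : Prop := free_elt G H I (fst p) /\ H (snd p).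

Definition sd_mul (G : Group) (I : Type) (p q : (I -> G -> Z) * G) : (I -> G -> Z) * G :=
  (fun i x => fst p i x + fst q i (gmul (ginv (snd p)) x), gmul (snd p) (snd q)).

Definition sd_embeds_in_wreath (G : Group) (H : G -> Prop) (I : Type) : Prop :=
  exists phi : (I -> G -> Z) * G -> (G -> Z) * G,
    (forall p, sd_carrier G H I p -> wr_carrier G (phi p)) /\
    (forall p q, sd_carrier G H I p -> sd_carrier G H I q ->
        phi (sd_mul G I p q) = wr_mul G (phi p) (phi q)) /\
    (forall p q, sd_carrier G H I p -> sd_carrier G H I q ->
        phi p = phi q -> p = q).

(** Pick representatives [r i] of pairwise distinct left cosets [r i H] and
    send [(m, h)] to [(sum_i m_i r_i^-1, h)].  Right multiplication by
    [r_i^-1] commutes with the left action of [G] on [ZG], so this respects the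
    semidirect product structure; and since [m_i] is supported on [H], the
    summand [m_i r_i^-1] is supported on the right coset [H r_i^-1].  These
    cosets are pairwise disjoint, so [m] can be read back off the sum. *)

From Stdlib Require Import ZArith List.
From Stdlib Require Import ClassicalEpsilon FunctionalExtensionality.

Section GroupLemmas.

Variable G : Group.

Lemma gmulV (x : G) : gmul x (ginv x) = gone.
Proof.
  rewrite <- (gmul1l G (gmul x (ginv x))), <- (gmulVl G (ginv x)) at 1.
  rewrite <- gmulA, (gmulA G (ginv x) x), gmulVl, gmul1l.
  apply gmulVl.
Qed.

Lemma gmul1r (x : G) : gmul x gone = x.
Proof. now rewrite <- (gmulVl G x), gmulA, gmulV, gmul1l. Qed.

Lemma ginv_unique (x y : G) : gmul x y = gone -> ginv x = y.
Proof.
  intros Exy.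
  now rewrite <- (gmul1r (ginv x)), <- Exy, gmulA, gmulVl, gmul1l.
Qed.

Lemma ginvM (x y : G) : ginv (gmul x y) = gmul (ginv y) (ginv x).
Proof.
  apply ginv_unique.
  now rewrite <- gmulA, (gmulA G y), gmulV, gmul1l, gmulV.
Qed.

Lemma gmulKg (x y : G) : gmul (ginv x) (gmul x y) = y.
Proof. now rewrite gmulA, gmulVl, gmul1l. Qed.

Lemma gmulgK (x y : G) : gmul (gmul y x) (ginv x) = y.
Proof. now rewrite <- gmulA, gmulV, gmul1r. Qed.

Lemma gmulgKV (x y : G) : gmul (gmul y (ginv x)) x = y.
Proof. now rewrite <- gmulA, gmulVl, gmul1r. Qed.

End GroupLemmas.

Section Embedding.

Variables (G : Group) (H : G -> Prop).
Hypothesis HH : is_subgroup G H.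
Variables (I : Type) (r : I -> G).
Hypothesis r_distinct : forall i j, H (gmul (ginv (r i)) (r j)) -> i = j.

(* The index of the right coset [H r_i^-1] containing [x], if any. *)
Definition coset_index (x : G) : option I :=
  match excluded_middle_informative (exists i, H (gmul x (r i))) with
  | left e => Some (proj1_sig (constructive_indefinite_description _ e))
  | right _ => None
  end.

Lemma coset_index_unique (x : G) (i j : I) :
  H (gmul x (r i)) -> H (gmul x (r j)) -> i = j.
Proof.
  intros Hi Hj. apply r_distinct.
  replace (gmul (ginv (r i)) (r j)) with (gmul (ginv (gmul x (r i))) (gmul x (r j))).
  - apply (sg_mul _ _ HH); [apply (sg_inv _ _ HH)|]; assumption.
  - now rewrite ginvM, <- gmulA, (gmulA G (ginv x)), gmulVl, gmul1l.
Qed.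

Lemma coset_index_SomeP (x : G) (i : I) :
  coset_index x = Some i <-> H (gmul x (r i)).
Proof.
  unfold coset_index.
  destruct excluded_middle_informative as [e | ne].
  - destruct constructive_indefinite_description as [j Hj]; simpl.
    split.
    + now intros [= <-].
    + intros Hi. f_equal. exact (coset_index_unique x j i Hj Hi).
  - split; [discriminate | intros Hi; exfalso; eauto].
Qed.

Lemma coset_index_mull (h x : G) :
  H h -> coset_index (gmul h x) = coset_index x.
Proof.
  intros Hh.
  assert (same : forall i, coset_index (gmul h x) = Some i <-> coset_index x = Some i).
  { intros i. rewrite !coset_index_SomeP, <- gmulA. split; intros Hx.
    - rewrite <- (gmulKg G h (gmul x (r i))).
      apply (sg_mul _ _ HH); [apply (sg_inv _ _ HH)|]; assumption.
    - apply (sg_mul _ _ HH); assumption. }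
  destruct (coset_index (gmul h x)) as [i|], (coset_index x) as [j|].
  - now apply same.
  - discriminate (proj1 (same i) eq_refl).
  - discriminate (proj2 (same j) eq_refl).
  - reflexivity.
Qed.

(* [fst (embed p) = sum_i (fst p i) r_i^-1] in [ZG]. *)
Definition embed (p : (I -> G -> Z) * G) : (G -> Z) * G :=
  (fun x => match coset_index x with
            | Some i => fst p i (gmul x (r i))
            | None => 0
            end, snd p).

Lemma embed_wr_carrier (p : (I -> G -> Z) * G) :
  sd_carrier G H I p -> wr_carrier G (embed p).
Proof.
  intros [[[l Hl] _] _].
  exists (map (fun iy => gmul (snd iy) (ginv (r (fst iy)))) l).
  intros x Hx; simpl in Hx.
  destruct (coset_index x) as [i|]; [|congruence].
  apply in_map_iff. exists (i, gmul x (r i)). split.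
  - apply gmulgK.
  - now apply Hl.
Qed.

Lemma embed_mul (p q : (I -> G -> Z) * G) :
  H (snd p) -> embed (sd_mul G I p q) = wr_mul G (embed p) (embed q).
Proof.
  destruct p as [m h], q as [m' h']; simpl; intros Hh.
  unfold embed, sd_mul, wr_mul; simpl. f_equal.
  apply functional_extensionality; intros x.
  rewrite coset_index_mull by (now apply (sg_inv _ _ HH)).
  destruct (coset_index x) as [i|]; [now rewrite gmulA | reflexivity].
Qed.

Lemma embed_coset (p : (I -> G -> Z) * G) (i : I) (y : G) :
  H y -> fst (embed p) (gmul y (ginv (r i))) = fst p i y.
Proof.
  intros Hy; simpl.
  rewrite (proj2 (coset_index_SomeP _ i)), gmulgKV; [reflexivity|].
  now rewrite gmulgKV.
Qed.

Lemma embed_inj (p q : (I -> G -> Z) * G) :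
  sd_carrier G H I p -> sd_carrier G H I q -> embed p = embed q -> p = q.
Proof.
  destruct p as [m h], q as [m' h'].
  intros [[_ Hm] _] [[_ Hm'] _] Epq.
  assert (Ef : fst (embed (m, h)) = fst (embed (m', h'))) by now rewrite Epq.
  assert (Eh : h = h') by exact (f_equal snd Epq).
  subst h'. f_equal.
  apply functional_extensionality; intros i.
  apply functional_extensionality; intros y.
  destruct (classic (H y)) as [Hy | Hy].
  - change (fst (m, h) i y = fst (m', h) i y).
    now rewrite <- (embed_coset (m, h) i y Hy), <- (embed_coset (m', h) i y Hy), Ef.
  - destruct (Z.eq_dec (m i y) 0), (Z.eq_dec (m' i y) 0); try congruence;
      exfalso; eauto.
Qed.

End Embedding.

Theorem lemma2 (G : Group) (H : G -> Prop) (HH : is_subgroup G H)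
  (I : Type) (hrank : card_le_index G H I) :
  sd_embeds_in_wreath G H I.
Proof.
  destruct hrank as [r r_distinct].
  exists (embed G H I r). split; [|split].
  - apply embed_wr_carrier.
  - intros p q [_ Hp] _. exact (embed_mul G H HH I r r_distinct p q Hp).
  - exact (embed_inj G H HH I r r_distinct).
Qed.
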